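(* Let $M$ be an object of an abelian category $\mathcal{A}$. Then: (1) $M$ is strongly self-Rickart if and only if $M$ is self-Rickart and ${\rm End}_{\mathcal{A}}(M)$ is an abelian ring. (2) $M$ is dual strongly self-Rickart if and only if $M$ is dual self-Rickart and ${\rm End}_{\mathcal{A}}(M)$ is an abelian ring.
   Context: A ring is abelian if every idempotent element is central. A morphism $f:X\to Y$ is a section if $f'f=1_X$ for some $f'$, a retraction if $ff'=1_Y$ for some $f'$. A monomorphism $k:K\to M$ is fully invariant if for every $h:M\to M$ there is $\alpha:K\to K$ with $hk=k\alpha$; an epimorphism $c:M\to C$ is fully coinvariant if for every $h:M\to M$ there is $\gamma:C\to C$ with $ch=\gamma c$. $M$ is self-Rickart if the kernel of every endomorphism of $M$ is a section; dual self-Rickart if the cokernel of every endomorphism of $M$ is a retraction; strongly self-Rickart if the kernel of every endomorphism of $M$ is a fully invariant section; dual strongly self-Rickart if the cokernel of every endomorphism of $M$ is a fully coinvariant retraction. *)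

(* A hand-rolled (honest) notion of abelian category:
   a preadditive category (Hom-sets are Z-modules, composition bilinear)
   with a zero object, binary biproducts, kernels and cokernels of every
   morphism, in which every monomorphism is a kernel and every epimorphism
   is a cokernel. *)
From HB Require Import structures.
From mathcomp Require Import all_boot all_algebra.
Set Implicit Arguments. Unset Strict Implicit. Unset Printing Implicit Defensive.
Import GRing.Theory.
Local Open Scope ring_scope.

Record preadditive := Preadditive {
  Obj :> Type;
  Hom : Obj -> Obj -> zmodType;
  mcomp : forall X Y Z : Obj, Hom Y Z -> Hom X Y -> Hom X Z;
  idm : forall X : Obj, Hom X X;
  compA : forall (W X Y Z : Obj) (f : Hom Y Z) (g : Hom X Y) (h : Hom W X),
      mcomp f (mcomp g h) = mcomp (mcomp f g) h;
  comp1m : forall (X Y : Obj) (f : Hom X Y), mcomp (idm Y) f = f;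
  compm1 : forall (X Y : Obj) (f : Hom X Y), mcomp f (idm X) = f;
  compDl : forall (X Y Z : Obj) (f g : Hom Y Z) (h : Hom X Y),
      mcomp (f + g) h = mcomp f h + mcomp g h;
  compDr : forall (X Y Z : Obj) (f : Hom Y Z) (g h : Hom X Y),
      mcomp f (g + h) = mcomp f g + mcomp f h
}.

Arguments mcomp {p X Y Z}.
Arguments idm {p}.

Section Notions.
Variable C : preadditive.

Definition is_mono (A B : C) (f : Hom A B) : Prop :=
  forall (X : C) (g h : Hom X A), mcomp f g = mcomp f h -> g = h.

Definition is_epi (A B : C) (f : Hom A B) : Prop :=
  forall (X : C) (g h : Hom B X), mcomp g f = mcomp h f -> g = h.

Definition is_kernel (M N K : C) (f : Hom M N) (k : Hom K M) : Prop :=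
  mcomp f k = 0 /\
  forall (X : C) (g : Hom X M), mcomp f g = 0 ->
    exists! u : Hom X K, mcomp k u = g.

Definition is_cokernel (M N Q : C) (f : Hom M N) (c : Hom N Q) : Prop :=
  mcomp c f = 0 /\
  forall (X : C) (g : Hom N X), mcomp g f = 0 ->
    exists! u : Hom Q X, mcomp u c = g.

Definition is_zero_object (Z : C) : Prop := idm Z = 0.

Definition is_biproduct (A B P : C) (i1 : Hom A P) (i2 : Hom B P)
    (p1 : Hom P A) (p2 : Hom P B) : Prop :=
  [/\ mcomp p1 i1 = idm A, mcomp p2 i2 = idm B,
      mcomp p1 i2 = 0, mcomp p2 i1 = 0
    & mcomp i1 p1 + mcomp i2 p2 = idm P].

Definition is_abelian : Prop :=
  [/\ (exists Z : C, is_zero_object Z),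
      (forall A B : C, exists (P : C) (i1 : Hom A P) (i2 : Hom B P)
        (p1 : Hom P A) (p2 : Hom P B), is_biproduct i1 i2 p1 p2),
      ((forall (M N : C) (f : Hom M N), exists (K : C) (k : Hom K M), is_kernel f k) /\
       (forall (M N : C) (f : Hom M N), exists (Q : C) (c : Hom N Q), is_cokernel f c)),
      (forall (A B : C) (f : Hom A B), is_mono f ->
        exists (Q : C) (g : Hom B Q), is_kernel g f)
    & (forall (A B : C) (f : Hom A B), is_epi f ->
        exists (K : C) (g : Hom K A), is_cokernel g f)].

Definition is_section (X Y : C) (f : Hom X Y) : Prop :=
  exists f' : Hom Y X, mcomp f' f = idm X.

Definition is_retraction (X Y : C) (f : Hom X Y) : Prop :=
  exists f' : Hom Y X, mcomp f f' = idm Y.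

Definition fully_invariant (K M : C) (k : Hom K M) : Prop :=
  forall h : Hom M M, exists alpha : Hom K K, mcomp h k = mcomp k alpha.

Definition fully_coinvariant (M Q : C) (c : Hom M Q) : Prop :=
  forall h : Hom M M, exists gamma : Hom Q Q, mcomp c h = mcomp gamma c.

(* "the kernel" is read as: every kernel (they are all isomorphic) *)
Definition self_rickart (M : C) : Prop :=
  forall (f : Hom M M) (K : C) (k : Hom K M), is_kernel f k -> is_section k.

Definition dual_self_rickart (M : C) : Prop :=
  forall (f : Hom M M) (Q : C) (c : Hom M Q), is_cokernel f c -> is_retraction c.

Definition strongly_self_rickart (M : C) : Prop :=
  forall (f : Hom M M) (K : C) (k : Hom K M), is_kernel f k ->
    fully_invariant k /\ is_section k.

Definition dual_strongly_self_rickart (M : C) : Prop :=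
  forall (f : Hom M M) (Q : C) (c : Hom M Q), is_cokernel f c ->
    fully_coinvariant c /\ is_retraction c.

End Notions.

Record abelianCategory := AbelianCategory {
  ab_cat :> preadditive;
  ab_axiom : is_abelian ab_cat
}.

Definition End (C : preadditive) (M : C) : Type := Hom M M.
HB.instance Definition _ (C : preadditive) (M : C) :=
  GRing.Zmodule.on (End M).

Section EndRing.
Variables (C : preadditive) (M : C).
Let mulE (f g : End M) : End M := mcomp f g.
Lemma End_mulA : associative mulE.
Proof. by move=> f g h; rewrite /mulE compA. Qed.
Lemma End_mul1 : left_id (idm M : End M) mulE.
Proof. by move=> f; rewrite /mulE comp1m. Qed.
Lemma End_mulr1 : right_id (idm M : End M) mulE.
Proof. by move=> f; rewrite /mulE compm1. Qed.
Lemma End_mulDl : left_distributive mulE +%R.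
Proof. by move=> f g h; rewrite /mulE compDl. Qed.
Lemma End_mulDr : right_distributive mulE +%R.
Proof. by move=> f g h; rewrite /mulE compDr. Qed.
End EndRing.

HB.instance Definition _ (C : preadditive) (M : C) :=
  GRing.Zmodule_isPzRing.Build (End M)
    (@End_mulA C M) (@End_mul1 C M) (@End_mulr1 C M)
    (@End_mulDl C M) (@End_mulDr C M).

Definition abelian_ring (R : pzRingType) : Prop :=
  forall e : R, e * e = e -> forall x : R, e * x = x * e.

From Pilot Require Import Defs.
From mathcomp Require Import all_boot all_algebra.
Set Implicit Arguments. Unset Strict Implicit. Unset Printing Implicit Defensive.
Import GRing.Theory.
Local Open Scope ring_scope.

(* A section k with retraction k' gives the idempotent k k' of End(M), and
   k is fully invariant as soon as k k' is central.  Conversely, if the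
   kernel of f is fully invariant then f g = 0 implies f x g = 0 for every x;
   applied to an idempotent e and its complement 1 - e this gives
   e x (1 - e) = 0 = (1 - e) x e, i.e. e x = e x e = x e.  Part (2) is part (1)
   in the opposite category. *)

Lemma comm_of_offdiag0 (R : pzRingType) (e x : R) :
  e * x * (1 - e) = 0 -> (1 - e) * x * e = 0 -> GRing.comm e x.
Proof.
rewrite mulrBr mulr1 !mulrBl mul1r => /subr0_eq exe /subr0_eq xe.
by rewrite /GRing.comm exe xe.
Qed.

Section Opposite.
Variable C : preadditive.

(* Kernels, sections and fully invariant monomorphisms of [opposite C] are,
   by conversion, cokernels, retractions and fully coinvariant epimorphisms
   of C, while End M becomes the converse ring. *)
Definition opposite : preadditive.
Proof.
refine (@Preadditive C (fun X Y => Defs.Hom Y X) (fun X Y Z f g => mcomp g f)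
          (@idm C) _ _ _ _ _) => *.
- by rewrite Defs.compA.
- exact: compm1.
- exact: comp1m.
- exact: compDr.
- exact: compDl.
Defined.

Lemma abelian_ring_End_op (M : C) :
  abelian_ring (End (M : opposite)) <-> abelian_ring (End M).
Proof. by split=> abM e e_idem x; symmetry; apply: abM. Qed.

End Opposite.

Section Preadditive.
Variable C : preadditive.

Lemma comp0m (X Y Z : C) (h : Defs.Hom X Y) : mcomp (0 : Defs.Hom Y Z) h = 0.
Proof.
apply: (addrI (mcomp (0 : Defs.Hom Y Z) h)).
by rewrite -compDl !addr0.
Qed.

Lemma fully_invariant_kernel_comp0 (M N K X : C) (f : Defs.Hom M N)
    (k : Defs.Hom K M) (g : Defs.Hom X M) (h : Defs.Hom M M) :
  is_kernel f k -> fully_invariant k -> mcomp f g = 0 -> mcomp f (mcomp h g) = 0.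
Proof.
move=> [fk0 k_univ] k_inv /k_univ [u [<- _]].
have [alpha hk] := k_inv h.
by rewrite (Defs.compA h) hk -Defs.compA Defs.compA fk0 comp0m.
Qed.

End Preadditive.

Section SelfRickart.
Variables (C : preadditive) (M : C).

Lemma abelian_End_of_fully_invariant_kernels :
  (forall f : End M, exists (K : C) (k : Defs.Hom K M),
     is_kernel f k /\ fully_invariant k) ->
  abelian_ring (End M).
Proof.
move=> ker e e_idem x.
have offdiag0 (f g : End M) : f * g = 0 -> f * x * g = 0.
  have [K [k [ker_k inv_k]]] := ker f.
  by rewrite -mulrA; exact: fully_invariant_kernel_comp0 ker_k inv_k.
apply: comm_of_offdiag0; apply: offdiag0.
  by rewrite mulrBr mulr1 e_idem subrr.
by rewrite mulrBl mul1r e_idem subrr.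
Qed.

Lemma fully_invariant_section (K : C) (k : Defs.Hom K M) :
  abelian_ring (End M) -> is_section k -> fully_invariant k.
Proof.
move=> abM [k' k'k] h; exists (mcomp k' (mcomp h k)).
have idem : (mcomp k k' : End M) * mcomp k k' = mcomp k k'.
  by rewrite [LHS]Defs.compA -(Defs.compA k k' k) k'k compm1.
have central : mcomp (mcomp k k') h = mcomp h (mcomp k k') := abM _ idem h.
by rewrite !Defs.compA central -(Defs.compA h) -(Defs.compA k) k'k compm1.
Qed.

Lemma strongly_self_rickartP :
  (forall f : End M, exists (K : C) (k : Defs.Hom K M), is_kernel f k) ->
  strongly_self_rickart M <-> self_rickart M /\ abelian_ring (End M).
Proof.
move=> ker; split=> [sM | [rM abM] f K k ker_k].
  split=> [f K k /sM[] // |].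
  apply: abelian_End_of_fully_invariant_kernels => f.
  have [K [k ker_k]] := ker f.
  by exists K, k; split=> //; case: (sM f K k ker_k).
have sec_k := rM f K k ker_k.
by split=> //; exact: fully_invariant_section.
Qed.

End SelfRickart.

Theorem proposition2p14 (A : abelianCategory) (M : A) :
  (strongly_self_rickart M <-> self_rickart M /\ abelian_ring (End M)) /\
  (dual_strongly_self_rickart M <-> dual_self_rickart M /\ abelian_ring (End M)).
Proof.
case: (ab_axiom A) => _ _ [ker coker] _ _.
split; first exact: strongly_self_rickartP.
have opP := @strongly_self_rickartP (opposite A) M (coker M M).
split=> [/opP[rM abM] | [rM abM]].
  by split=> //; apply/abelian_ring_End_op.
by apply/opP; split=> //; apply/abelian_ring_End_op.
Qed.
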